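(* Let $A,B,C\in\mathcal G$ be mutually adjacent. Then there is a star or a top containing $A$, $B$ and $C$.
   Context: $K$ is a (not necessarily commutative) field and $V$ is a left vector space over $K$ of arbitrary (possibly infinite) dimension with $\dim V>2$. $\mathcal G:=\{X\le V\mid X\cong V/X\}$, assumed nonempty. Two elements $X,Y\in\mathcal G$ are adjacent if $\dim((X+Y)/X)=\dim((X+Y)/Y)=1$. A star is a set $\mathcal G[M\rangle:=\{E\le V\mid M\le E,\ \dim(E/M)=1\}$, where $M\le V$ is a subspace for which some $X\in\mathcal G$ satisfies $M\le X$, $\dim(X/M)=1$. A top is a set $\mathcal G\langle N]:=\{E\le V\mid E\le N,\ \dim(N/E)=1\}$, where $N\le V$ is a subspace for which some $X\in\mathcal G$ satisfies $X\le N$, $\dim(N/X)=1$. *)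

From HB Require Import structures.
From mathcomp Require Import all_boot all_algebra.
Set Implicit Arguments. Unset Strict Implicit. Unset Printing Implicit Defensive.
Import GRing.Theory.
Local Open Scope ring_scope.

(* K : a division ring (unitRingType whose nonzero elements are all units),
   V : a left K-vector space (lmodType K), of arbitrary dimension.
   Subspaces are represented as predicates V -> Prop. *)

Section Defs.
Variables (K : unitRingType) (V : lmodType K).

Definition subspace (X : V -> Prop) : Prop :=
  X 0 /\ forall (k : K) (u v : V), X u -> X v -> X (k *: u + v).

Definition subsp (X Y : V -> Prop) : Prop := forall v, X v -> Y v.

Definition sumsp (X Y : V -> Prop) : V -> Prop :=
  fun v => exists x y, X x /\ Y y /\ v = x + y.

(* M <= E and dim (E/M) = 1 : E/M is spanned by the class of a single
   vector v of E not in M. *)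
Definition codim1 (M E : V -> Prop) : Prop :=
  subsp M E /\
  exists v, E v /\ ~ M v /\
    forall e, E e -> exists (k : K) m, M m /\ e = k *: v + m.

(* X ≅ V/X : by the first isomorphism theorem, an isomorphism V/X -> X is
   the same as a K-linear map V -> V with kernel X and image X. *)
Definition iso_quot (X : V -> Prop) : Prop :=
  exists f : V -> V,
    (forall (k : K) (u v : V), f (k *: u + v) = k *: f u + f v) /\
    (forall v, f v = 0 <-> X v) /\
    (forall x, X x <-> exists v, f v = x).

Definition inG (X : V -> Prop) : Prop := subspace X /\ iso_quot X.

Definition adjacent (X Y : V -> Prop) : Prop :=
  codim1 X (sumsp X Y) /\ codim1 Y (sumsp X Y).

Definition in_star (M E : V -> Prop) : Prop := subspace E /\ codim1 M E.
Definition star_base (M : V -> Prop) : Prop :=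
  subspace M /\ exists X, inG X /\ codim1 M X.

Definition in_top (N E : V -> Prop) : Prop := subspace E /\ codim1 E N.
Definition top_base (N : V -> Prop) : Prop :=
  subspace N /\ exists X, inG X /\ codim1 X N.

Definition dim_gt2 : Prop :=
  exists u1 u2 u3 : V, forall a b c : K,
    a *: u1 + b *: u2 + c *: u3 = 0 -> [/\ a = 0, b = 0 & c = 0].

End Defs.

From mathcomp Require Import all_boot all_algebra.
From Stdlib Require Import Classical.
Local Open Scope ring_scope.
Import GRing.Theory.
Set Implicit Arguments. Unset Strict Implicit.

(* If C lies in A + B, then A, B and C are all hyperplanes of A + B: a
   hyperplane A of N is maximal among the proper subspaces of N containing it,
   so A + C = A + B.  Otherwise pick c in C outside A + B.  Writing x in C both
   as k c + a (a in A) and as k' c + b (b in B) forces k = k' and a = b, hence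
   C = <c> + (A ∩ B); in particular A ∩ C lies in A ∩ B, and maximality of the
   hyperplane A ∩ C of A gives A ∩ B = A ∩ C, so A, B, C all lie in the star
   of A ∩ B. *)

Definition capsp (K : unitRingType) (V : lmodType K) (X Y : V -> Prop) : V -> Prop :=
  fun v => X v /\ Y v.

Section Subspaces.
Variables (K : unitRingType) (V : lmodType K).
Implicit Types (X Y : V -> Prop).

Lemma subspaceD X u v : subspace X -> X u -> X v -> X (u + v).
Proof. by move=> [_ hX] Xu Xv; have := hX 1 u v Xu Xv; rewrite scale1r. Qed.

Lemma subspaceZ X k u : subspace X -> X u -> X (k *: u).
Proof. by move=> [X0 hX] Xu; have := hX k u 0 Xu X0; rewrite addr0. Qed.

Lemma subspaceB X u v : subspace X -> X u -> X v -> X (u - v).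
Proof. by move=> sX Xu Xv; rewrite -scaleN1r; apply: subspaceD => //; apply: subspaceZ. Qed.

Lemma subspaceZK X k u : subspace X -> k \is a GRing.unit -> X (k *: u) -> X u.
Proof. by move=> sX ku /(subspaceZ k^-1 sX); rewrite scalerA mulVr // scale1r. Qed.

Lemma sumsp_l X Y x : subspace Y -> X x -> sumsp X Y x.
Proof. by move=> [Y0 _] Xx; exists x, 0; rewrite addr0. Qed.

Lemma sumsp_r X Y y : subspace X -> Y y -> sumsp X Y y.
Proof. by move=> [X0 _] Yy; exists 0, y; rewrite add0r. Qed.

Lemma sumspC X Y x : sumsp X Y x <-> sumsp Y X x.
Proof. by split=> -[a [b [Xa [Yb ->]]]]; exists b, a; rewrite addrC. Qed.

Lemma subspace_sumsp X Y : subspace X -> subspace Y -> subspace (sumsp X Y).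
Proof.
move=> sX sY; split; first by exists 0, 0; rewrite addr0; split; [case: sX | case: sY].
move=> k _ _ [a [b [Xa [Yb ->]]]] [a' [b' [Xa' [Yb' ->]]]].
exists (k *: a + a'), (k *: b + b'); split; first exact: (proj2 sX).
by split; [exact: (proj2 sY) | rewrite scalerDr addrACA].
Qed.

Lemma subspace_capsp X Y : subspace X -> subspace Y -> subspace (capsp X Y).
Proof. by move=> [X0 hX] [Y0 hY]; split=> // k u v [? ?] [? ?]; split; [apply: hX | apply: hY]. Qed.

Lemma sumsp_sub X Y Z : subspace Z -> subsp X Z -> subsp Y Z -> subsp (sumsp X Y) Z.
Proof. by move=> sZ sXZ sYZ _ [x [y [Xx [Yy ->]]]]; apply: subspaceD; [|apply: sXZ|apply: sYZ]. Qed.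

Lemma codim1_ext (M M' E E' : V -> Prop) :
  (forall x, M x <-> M' x) -> (forall x, E x <-> E' x) -> codim1 M E -> codim1 M' E'.
Proof.
move=> eM eE [sME [v [Ev [nMv hv]]]]; split; first by move=> x /eM /sME /eE.
exists v; split; first exact/eE.
split; first by move/eM.
by move=> e /eE /hv [k [m [Mm ->]]]; exists k, m; split=> //; apply/eM.
Qed.

Section DivisionRing.
Hypothesis Kdiv : forall x : K, x != 0 -> x \is a GRing.unit.

Lemma codim1_gen (M E : V -> Prop) w :
  subspace M -> codim1 M E -> E w -> ~ M w ->
  forall e, E e -> exists k m, M m /\ e = k *: w + m.
Proof.
move=> sM [_ [v [_ [_ hv]]]] Ew nMw e Ee.
have [k0 [m0 [Mm0 ew]]] := hv w Ew.
have [k [m [Mm ->]]] := hv e Ee.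
have k0u : k0 \is a GRing.unit.
  by apply: Kdiv; apply/eqP=> k00; apply: nMw; rewrite ew k00 scale0r add0r.
exists (k / k0), (m - (k / k0) *: m0); split; first by apply: subspaceB => //; apply: subspaceZ.
by rewrite ew scalerDr scalerA mulrVK // [m - _]addrC addrA addrK.
Qed.

Lemma codim1_max (M E N : V -> Prop) w :
  subspace M -> subspace E -> codim1 M N -> subsp M E -> subsp E N ->
  E w -> ~ M w -> subsp N E.
Proof.
move=> sM sE cMN sME sEN Ew nMw x /(codim1_gen sM cMN (sEN _ Ew) nMw) [k [m [Mm ->]]].
by apply: subspaceD => //; [apply: subspaceZ | apply: sME].
Qed.

Lemma codim1_capsp X Y :
  subspace X -> subspace Y -> codim1 Y (sumsp X Y) -> codim1 (capsp X Y) X.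
Proof.
move=> sX sY cY; have [_ [v [[a [b [Xa [Yb ev]]]] [nYv _]]]] := cY.
have nYa : ~ Y a by move=> Ya; apply: nYv; rewrite ev; apply: subspaceD.
split; first by move=> x [].
exists a; split=> //; split; first by case.
move=> x Xx; have [k [y [Yy ex]]] := codim1_gen sY cY (sumsp_l sY Xa) nYa (sumsp_l sY Xx).
exists k, y; split=> //; split=> //.
have -> : y = x - k *: a by rewrite ex addrAC subrr add0r.
by apply: subspaceB => //; apply: subspaceZ.
Qed.

Section Triangle.
Variables A B C : V -> Prop.
Hypotheses (sA : subspace A) (sB : subspace B) (sC : subspace C).
Hypotheses (cAB : codim1 A (sumsp A B)) (cBA : codim1 B (sumsp A B)).
Hypotheses (cAC : codim1 A (sumsp A C)) (cCA : codim1 C (sumsp A C)).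
Hypothesis (cBC : codim1 B (sumsp B C)).

Lemma codim1_sumsp_of_sub : subsp C (sumsp A B) -> codim1 C (sumsp A B).
Proof.
move=> sCN; have sN := subspace_sumsp sA sB.
have sAN : subsp A (sumsp A B) by move=> x; apply: sumsp_l.
have sACN : subsp (sumsp A C) (sumsp A B) by apply: sumsp_sub.
have [_ [w [ACw [nAw _]]]] := cAC.
have sNAC := codim1_max sA (subspace_sumsp sA sC) cAB (fun x => sumsp_l sC) sACN ACw nAw.
by apply: (codim1_ext _ _ cCA) => // x; split; [apply: sACN | apply: sNAC].
Qed.

Variable c : V.
Hypotheses (Cc : C c) (nNc : ~ sumsp A B c).

Let nAc : ~ A c. Proof. by move=> Ac; apply: nNc; apply: sumsp_l. Qed.

Lemma sumsp_line_capsp x : C x -> exists k m, capsp A B m /\ x = k *: c + m.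
Proof.
move=> Cx; have nBc : ~ B c by move=> Bc; apply: nNc; apply: sumsp_r.
have [k [a [Aa ea]]] := codim1_gen sA cAC (sumsp_r sA Cc) nAc (sumsp_r sA Cx).
have [k' [b [Bb eb]]] := codim1_gen sB cBC (sumsp_r sB Cc) nBc (sumsp_r sB Cx).
have [ekk|nkk] := eqVneq k k'.
  subst k'; exists k, a; split; last by []; split=> //.
  by have -> : a = b by apply: (@addrI _ (k *: c)); rewrite -ea -eb.
exfalso; apply: nNc; have kk_unit : k - k' \is a GRing.unit by apply/Kdiv; rewrite subr_eq0.
apply: (subspaceZK (subspace_sumsp sA sB) kk_unit).
have -> : (k - k') *: c = b - a.
  rewrite scalerBl; have [-> ->] : k *: c = x - a /\ k' *: c = x - b.
    by split; [rewrite ea | rewrite eb]; rewrite addrK.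
  by rewrite opprB addrC addrA addrNK.
by apply: subspaceB; [apply: subspace_sumsp | apply: sumsp_r | apply: sumsp_l].
Qed.

Lemma capsp_sub : subsp (capsp A C) (capsp A B).
Proof.
move=> x [Ax Cx]; have [k [m [ABm ex]]] := sumsp_line_capsp Cx.
have [k0|nk0] := eqVneq k 0; first by rewrite ex k0 scale0r add0r.
exfalso; apply: nAc; apply: (subspaceZK sA (Kdiv nk0)).
have -> : k *: c = x - m by rewrite ex addrK.
by apply: subspaceB => //; case: ABm.
Qed.

Lemma codim1_capsp_of_not_sum : codim1 (capsp A B) C.
Proof.
have sM := subspace_capsp sA sB.
have sMC : subsp (capsp A B) C.
  move=> m ABm; apply: NNPP => nCm.
  have [_ [a [Aa [nMa _]]]] := codim1_capsp sA sB cBA.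
  have cACA : codim1 (capsp A C) A := codim1_capsp sA sC cCA.
  have sMA : subsp (capsp A B) A by move=> x [].
  have nACm : ~ capsp A C m by case.
  by apply: nMa; apply: (codim1_max (subspace_capsp sA sC) sM cACA capsp_sub sMA ABm nACm).
split=> //; exists c; split=> //; split; first by case.
exact: sumsp_line_capsp.
Qed.

End Triangle.
End DivisionRing.
End Subspaces.

Theorem lemma2p3 (K : unitRingType) (V : lmodType K)
  (Kdiv : forall x : K, x != 0 -> x \is a GRing.unit)
  (hdim : dim_gt2 V)
  (hG : exists X : V -> Prop, inG X)
  (A B C : V -> Prop)
  (hA : inG A) (hB : inG B) (hC : inG C)
  (hAB : adjacent A B) (hBC : adjacent B C) (hAC : adjacent A C) :
  (exists M : V -> Prop, star_base M /\ in_star M A /\ in_star M B /\ in_star M C)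
  \/
  (exists N : V -> Prop, top_base N /\ in_top N A /\ in_top N B /\ in_top N C).
Proof.
have [sA sB sC] := And3 (proj1 hA) (proj1 hB) (proj1 hC).
case: hAB hBC hAC => cAB cBA [cBC _] [cAC cCA].
case: (classic (subsp C (sumsp A B))) => [sCN | /not_all_ex_not [c nCN]].
  right; exists (sumsp A B); split; first by split; [apply: subspace_sumsp | exists A].
  do 2 (split; first by split).
  by split=> //; apply: (codim1_sumsp_of_sub Kdiv sA sB sC cAB cAC cCA).
have [Cc nNc] := imply_to_and _ _ nCN.
have cMA : codim1 (capsp A B) A := codim1_capsp Kdiv sA sB cBA.
have cMB : codim1 (capsp A B) B.
  apply: (codim1_ext (M := capsp B A) (E := B)) => //; first by move=> x; split=> -[].
  by apply: (codim1_capsp Kdiv sB sA); apply: (codim1_ext _ _ cAB) => // x; apply: sumspC.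
have cMC := codim1_capsp_of_not_sum Kdiv sA sB sC cBA cAC cCA cBC Cc nNc.
left; exists (capsp A B); split; first by split; [apply: subspace_capsp | exists A].
by do 2 (split; first by split); split.
Qed.
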